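(* Consider the SPIMEX scheme for the multi-agent epidemic chemotaxis system described in the context. For every $k=0,1,2,\dots$, the Lagrange multiplier $\xi^{k+1}\in\mathbb{R}$ associated with the mass-conservation constraint in the KKT conditions of the projection step satisfies $\xi^{k+1}\ge0$.
   Context: Unknowns: $\bm\Phi=(S,E,P,A,I^+,I^-,R)$ (7 mobile agent densities), $H$ (hospitalized), $p$ (attractiveness field); $\bm\Psi=(\bm\Phi,H)=(\psi_1,\dots,\psi_8)$. Positive constants $D,\eta,\eta',\lambda,\beta,\delta_A,\delta_I^+,\delta_I^-,\delta_H,\delta_R,\bar\delta^+_{\mathcal P},\bar\delta^-_{\mathcal P}$, and $\rho,p_H\in[0,1]$; $p^0$ is a fixed smooth periodic function with $0<m_p\le p^0\le M_p$. The linear operator $\mathcal L$ acts by $(\mathcal L\bm\Phi)_S=\delta_RR$, $(\mathcal L\bm\Phi)_E=-\eta E$, $(\mathcal L\bm\Phi)_P=\eta E-\eta'P$, $(\mathcal L\bm\Phi)_A=\eta'(1-\rho)P-\delta_AA$, $(\mathcal L\bm\Phi)_{I^-}=\eta'\rho(1-p_H)P-\delta_I^-I^-$, $(\mathcal L\bm\Phi)_{I^+}=\eta'\rho p_HP-\delta_I^+I^+$, $(\mathcal L\bm\Phi)_R=\delta_AA+\delta_I^-I^--\delta_RR$. The nonlinear term $\mathcal N(\bm\Phi,H)$ has $S$-component $-\lambda(\beta(P+A)+I^-+I^+)S$, $E$-component $+\lambda(\beta(P+A)+I^-+I^+)S$, $R$-component $\delta_HH$, and all other components zero. Grid and discrete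 operators: periodic square $\Omega$ of side $L$, $h=L/N$, $X$ the periodic grid functions; $(D_xu)_{i+1/2,j}=(u_{i+1,j}-u_{i,j})/h$, $D_y$ analogous; $(d_xf)_{i,j}=(f_{i+1/2,j}-f_{i-1/2,j})/h$, $d_y$ analogous; $\nabla_h=(D_x,D_y)$, $\nabla_h\cdot(f^x,f^y)=d_xf^x+d_yf^y$, $\Delta_h=\nabla_h\cdot\nabla_h$; $\nabla_h\cdot(w\nabla_hv)=d_x(\bar wD_xv)+d_y(\bar wD_yv)$ with $\bar w$ face-centred averages of $w$; applied componentwise to vectors. $\langle u,v\rangle=h^2\sum_{i,j=1}^Nu_{i,j}v_{i,j}$, $\|u\|_{L^2}^2=\langle u,u\rangle$, $\|u\|_{H^1}^2=\|u\|_{L^2}^2+\|\nabla_hu\|_{L^2}^2$; $p^0$ denotes its grid restriction. Scheme: $\tau>0$; given initial grid functions $(\bm\Psi_h^0,p_h^0)$. Predictor for $k\ge1$: $\frac{\tilde{\bm\Phi}_h^{k+1}-\bm\Phi_h^k}{\tau}=\frac D8\Delta_h(\tilde{\bm\Phi}_h^{k+1}+\bm\Phi_h^k)-\frac{3D}4\nabla_h\cdot(\frac{\bm\Phi_h^k}{p_h^k+p^0}\nabla_h(p_h^k+p^0))+\frac D4\nabla_h\cdot(\frac{\bm\Phi_h^{k-1}}{p_h^{k-1}+p^0}\nabla_h(p_h^{k-1}+p^0))+\frac32\mathcal L\bm\Phi_h^k-\frac12\mathcal L\bm\Phi_h^{k-1}+\frac32\mathcal N(\bm\Phi_h^k,H_h^k)-\frac12\mathcal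 N(\bm\Phi_h^{k-1},H_h^{k-1})$, $\frac{\tilde H_h^{k+1}-H_h^k}{\tau}=\frac32\delta_I^+(I^+)_h^k-\frac12\delta_I^+(I^+)_h^{k-1}-\frac32\delta_HH_h^k+\frac12\delta_HH_h^{k-1}$, $\frac{\tilde p_h^{k+1}-p_h^k}{\tau}=\frac{\eta D}2\Delta_h(\tilde p_h^{k+1}+p_h^k)+\frac32[\bar\delta^+_{\mathcal P}(S_h^k+E_h^k+P_h^k+A_h^k+R_h^k)-\bar\delta^-_{\mathcal P}p_h^k]-\frac12[\bar\delta^+_{\mathcal P}(S_h^{k-1}+E_h^{k-1}+P_h^{k-1}+A_h^{k-1}+R_h^{k-1})-\bar\delta^-_{\mathcal P}p_h^{k-1}]$; for $k=0$: $\frac{\tilde{\bm\Phi}_h^1-\bm\Phi_h^0}{\tau}=\frac D8\Delta_h(\tilde{\bm\Phi}_h^1+\bm\Phi_h^0)-\frac D2\nabla_h\cdot(\frac{\bm\Phi_h^0}{p_h^0+p^0}\nabla_h(p_h^0+p^0))+\mathcal L\bm\Phi_h^0+\mathcal N(\bm\Phi_h^0,H_h^0)$, $\frac{\tilde p_h^1-p_h^0}{\tau}=\frac{\eta D}2\Delta_h(\tilde p_h^1+p_h^0)+\bar\delta^+_{\mathcal P}(S_h^0+E_h^0+P_h^0+A_h^0+R_h^0)-\bar\delta^-_{\mathcal P}p_h^0$, $\frac{\tilde H_h^1-H_h^0}{\tau}=\delta_I^+(I^+)_h^0-\delta_HH_h^0$. Corrector: $(\bm\Psi_h^{k+1},p_h^{k+1})$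 minimizes $\frac12(\sum_{i=1}^8\|\psi_i-\tilde\psi_{i,h}^{k+1}\|_{L^2}^2+\|p-\tilde p_h^{k+1}\|_{H^1}^2)$ subject to $\psi_i\ge0$ ($i=1,\dots,8$), $p\ge0$ and $\langle\sum_{i=1}^8\psi_i,1\rangle=\langle\sum_{i=1}^8\psi_{i,h}^0,1\rangle$; its KKT conditions read $\bm\Psi_h^{k+1}=\tilde{\bm\Psi}_h^{k+1}+\bm\lambda_h^{k+1}-\xi^{k+1}(1,\dots,1)^\top$, $(I-\Delta_h)p_h^{k+1}=(I-\Delta_h)\tilde p_h^{k+1}+\zeta_h^{k+1}$, $\lambda_{i,h}^{k+1}\psi_{i,h}^{k+1}=0$, $\zeta_h^{k+1}p_h^{k+1}=0$, $\lambda_{i,h}^{k+1}\ge0$, $\zeta_h^{k+1}\ge0$, together with the mass constraint, where $\bm\lambda_h^{k+1}\in X^8$, $\zeta_h^{k+1}\in X$, $\xi^{k+1}\in\mathbb{R}$. *)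

From HB Require Import structures.
From mathcomp Require Import all_boot all_order all_algebra.
Set Implicit Arguments. Unset Strict Implicit. Unset Printing Implicit Defensive.
Import Order.TTheory GRing.Theory Num.Theory.
Local Open Scope ring_scope.

(* Periodic grid functions on an N x N grid (indices taken cyclically). *)
(* A cell-centred grid function u_{i,j} is  u : grid R N.               *)
(* A face-centred function f_{i+1/2,j} (resp. f_{i,j+1/2}) is stored as *)
(* the grid function whose value at (i,j) is f_{i+1/2,j} (resp.         *)
(* f_{i,j+1/2}).                                                        *)
Definition grid (R : Type) (N : nat) := 'I_N -> 'I_N -> R.

Section Grid.
Variables (R : realFieldType) (N : nat) (h : R).

Definition gadd (u v : grid R N) : grid R N := fun i j => u i j + v i j.
Definition gcst (a : R) : grid R N := fun _ _ => a.

(* (D_x u)_{i+1/2,j} = (u_{i+1,j} - u_{i,j}) / h, stored at (i,j) *)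
Definition Dx (u : grid R N) : grid R N := fun i j => (u (ordS i) j - u i j) / h.
Definition Dy (u : grid R N) : grid R N := fun i j => (u i (ordS j) - u i j) / h.
(* (d_x f)_{i,j} = (f_{i+1/2,j} - f_{i-1/2,j}) / h *)
Definition dx (f : grid R N) : grid R N := fun i j => (f i j - f (ord_pred i) j) / h.
Definition dy (f : grid R N) : grid R N := fun i j => (f i j - f i (ord_pred j)) / h.

Definition lap (u : grid R N) : grid R N := fun i j => dx (Dx u) i j + dy (Dy u) i j.

Definition avgx (w : grid R N) : grid R N := fun i j => (w i j + w (ordS i) j) / 2.
Definition avgy (w : grid R N) : grid R N := fun i j => (w i j + w i (ordS j)) / 2.

(* nabla_h . (w nabla_h v) = d_x(wbar D_x v) + d_y(wbar D_y v) *)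
Definition divwgrad (w v : grid R N) : grid R N :=
  fun i j => dx (fun a b => avgx w a b * Dx v a b) i j
           + dy (fun a b => avgy w a b * Dy v a b) i j.

Definition ginner (u v : grid R N) : R :=
  h ^+ 2 * \sum_(i < N) \sum_(j < N) u i j * v i j.
Definition L2sq (u : grid R N) : R := ginner u u.
Definition H1sq (u : grid R N) : R := ginner u u + ginner (Dx u) (Dx u) + ginner (Dy u) (Dy u).

End Grid.

Record params (R : Type) := Params {
  pD : R; peta : R; peta' : R; plambda : R; pbeta : R;
  pdA : R; pdIp : R; pdIm : R; pdH : R; pdR : R;
  pdPp : R; pdPm : R; prho : R; ppH : R }.

Definition params_ok (R : realFieldType) (q : params R) : Prop :=
  0 < pD q /\ 0 < peta q /\ 0 < peta' q /\ 0 < plambda q /\ 0 < pbeta q /\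
  0 < pdA q /\ 0 < pdIp q /\ 0 < pdIm q /\ 0 < pdH q /\ 0 < pdR q /\
  0 < pdPp q /\ 0 < pdPm q /\ 0 <= prho q <= 1 /\ 0 <= ppH q <= 1.

(* Component indices of Psi = (S,E,P,A,I^+,I^-,R,H) : 'I_8 -> grid *)
Definition iS  : 'I_8 := @Ordinal 8 0 isT.
Definition iE  : 'I_8 := @Ordinal 8 1 isT.
Definition iP  : 'I_8 := @Ordinal 8 2 isT.
Definition iA  : 'I_8 := @Ordinal 8 3 isT.
Definition iIp : 'I_8 := @Ordinal 8 4 isT.
Definition iIm : 'I_8 := @Ordinal 8 5 isT.
Definition iR  : 'I_8 := @Ordinal 8 6 isT.
Definition iH  : 'I_8 := @Ordinal 8 7 isT.

Section Model.
Variables (R : realFieldType) (N : nat) (q : params R).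
Local Notation grid := (grid R N).

(* The linear operator L, applied to the Phi-part of Psi; component c of L Phi
   for c = S,E,P,A,I^+,I^-,R (the H slot, index 7, is unused and set to 0). *)
Definition Lop (Psi : 'I_8 -> grid) (c : 'I_8) : grid := fun i j =>
  let S := Psi iS i j in let E := Psi iE i j in let P := Psi iP i j in
  let A := Psi iA i j in let Ip := Psi iIp i j in let Im := Psi iIm i j in
  let Rr := Psi iR i j in
  match val c with
  | 0 => pdR q * Rr
  | 1 => - (peta q * E)
  | 2 => peta q * E - peta' q * P
  | 3 => peta' q * (1 - prho q) * P - pdA q * A
  | 4 => peta' q * prho q * ppH q * P - pdIp q * Ip
  | 5 => peta' q * prho q * (1 - ppH q) * P - pdIm q * Im
  | 6 => pdA q * A + pdIm q * Im - pdR q * Rr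
  | _ => 0
  end.

Definition Nop (Psi : 'I_8 -> grid) (c : 'I_8) : grid := fun i j =>
  let force := plambda q * (pbeta q * (Psi iP i j + Psi iA i j)
                             + Psi iIm i j + Psi iIp i j) * Psi iS i j in
  match val c with
  | 0 => - force
  | 1 => force
  | 6 => pdH q * Psi iH i j
  | _ => 0
  end.

Definition chemo (h : R) (p0 phi p : grid) : grid :=
  divwgrad h (fun i j => phi i j / (p i j + p0 i j)) (gadd p p0).

Definition psrc (Psi : 'I_8 -> grid) (p : grid) : grid := fun i j =>
  pdPp q * (Psi iS i j + Psi iE i j + Psi iP i j + Psi iA i j + Psi iR i j)
  - pdPm q * p i j.

Definition sumPsi (Psi : 'I_8 -> grid) : grid := fun i j => \sum_(c < 8) Psi c i j.

Definition Jcorr (h : R) (tPsi : 'I_8 -> grid) (tp : grid)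
    (Psi : 'I_8 -> grid) (p : grid) : R :=
  (\sum_(c < 8) L2sq h (fun i j => Psi c i j - tPsi c i j)
   + H1sq h (fun i j => p i j - tp i j)) / 2.

Definition corr_feasible (h : R) (mass0 : R) (Psi : 'I_8 -> grid) (p : grid) : Prop :=
  (forall c i j, 0 <= Psi c i j) /\ (forall i j, 0 <= p i j) /\
  ginner h (sumPsi Psi) (gcst 1) = mass0.

End Model.

(** The predictor conserves the total mass of the eight compartments: after
    summing over the periodic grid the discrete divergences telescope away,
    and the reaction terms cancel between compartments.  The corrector's mass
    constraint then forces [Psi^{k+1}] and [tPsi^{k+1}] to have the same
    total mass, so summing [Psi = tPsi + lam - xi] over compartments and grid
    points gives [8 N^2 xi = sum lam >= 0]. *)

From HB Require Import structures.
From mathcomp Require Import all_boot all_order all_algebra.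
From mathcomp Require Import ring lra.
Import Order.TTheory GRing.Theory Num.Theory.
Local Open Scope ring_scope.
Set Implicit Arguments. Unset Strict Implicit. Unset Printing Implicit Defensive.

Section GridSum.
Variables (R : realFieldType) (N : nat).
Implicit Types (u v : grid R N) (a : R).

Definition gsum u : R := \sum_(i < N) \sum_(j < N) u i j.

Lemma gsumD u v : gsum (fun i j => u i j + v i j) = gsum u + gsum v.
Proof. by rewrite /gsum -big_split; apply: eq_bigr => i _; rewrite big_split. Qed.

Lemma gsumB u v : gsum (fun i j => u i j - v i j) = gsum u - gsum v.
Proof. by rewrite /gsum -sumrB; apply: eq_bigr => i _; rewrite sumrB. Qed.

Lemma gsumZ a u : gsum (fun i j => a * u i j) = a * gsum u.
Proof. by rewrite /gsum mulr_sumr; apply: eq_bigr => i _; rewrite mulr_sumr. Qed.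

Lemma gsum_cst a : gsum (fun _ _ => a) = a *+ (N * N).
Proof.
rewrite /gsum; under eq_bigr do rewrite sumr_const card_ord.
by rewrite sumr_const card_ord -mulrnA.
Qed.

Lemma gsum_sum (I : finType) (F : I -> grid R N) :
  gsum (fun i j => \sum_c F c i j) = \sum_c gsum (F c).
Proof.
by rewrite /gsum [RHS]exchange_big; apply: eq_bigr => i _; rewrite exchange_big.
Qed.

Lemma gsum_ge0 u : (forall i j, 0 <= u i j) -> 0 <= gsum u.
Proof. by move=> u_ge0; do 2!apply: sumr_ge0 => ? _. Qed.

Lemma ginner_cst1 h u : ginner h u (gcst 1) = h ^+ 2 * gsum u.
Proof. by rewrite /ginner /gcst; under eq_bigr do under eq_bigr do rewrite mulr1. Qed.

Lemma gsum_dx h f : gsum (dx h f) = 0.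
Proof.
rewrite /gsum /dx exchange_big; apply: big1 => j _.
rewrite -mulr_suml sumrB.
by rewrite -(@reindex_inj _ _ _ _ _ xpredT (fun i => f i j) (@ord_pred_inj N)) subrr mul0r.
Qed.

Lemma gsum_dy h f : gsum (dy h f) = 0.
Proof.
rewrite /gsum /dy; apply: big1 => i _.
rewrite -mulr_suml sumrB.
by rewrite -(@reindex_inj _ _ _ _ _ xpredT (fun j => f i j) (@ord_pred_inj N)) subrr mul0r.
Qed.

Lemma gsum_lap h u : gsum (lap h u) = 0.
Proof. by rewrite /lap gsumD gsum_dx gsum_dy addr0. Qed.

Lemma gsum_divwgrad h w v : gsum (divwgrad h w v) = 0.
Proof. by rewrite /divwgrad gsumD gsum_dx gsum_dy addr0. Qed.

Lemma gsum_chemo h p0 phi p : gsum (chemo h p0 phi p) = 0.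
Proof. exact: gsum_divwgrad. Qed.

Lemma total_gsum_explicit_step (I : finType) (tau : R) (X Y T r : I -> grid R N) :
  tau != 0 -> (forall c, gsum (T c) = 0) -> (forall i j, \sum_c r c i j = 0) ->
  (forall c i j, (Y c i j - X c i j) / tau = T c i j + r c i j) ->
  \sum_c gsum (Y c) = \sum_c gsum (X c).
Proof.
move=> tau_neq0 T_mass0 r_sum0 step; apply/eqP; rewrite -subr_eq0 -sumrB.
have incr c : gsum (Y c) - gsum (X c) = tau * gsum (T c) + tau * gsum (r c).
  rewrite -gsumB -!gsumZ -gsumD /gsum.
  apply: eq_bigr => i _; apply: eq_bigr => j _.
  by rewrite -mulrDr -step mulrC divfK.
under eq_bigr do rewrite incr T_mass0 mulr0 add0r.
rewrite -mulr_sumr -gsum_sum.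
suff -> : gsum (fun i j => \sum_c r c i j) = 0 by rewrite mulr0.
by do 2!apply: big1 => ? _; exact: r_sum0.
Qed.

Lemma mass_multiplier_ge0 (I : finType) (X Y lam : I -> grid R N) (xi : R) :
  (0 < N)%N -> (0 < #|I|)%N ->
  (forall c i j, Y c i j = X c i j + lam c i j - xi) ->
  (forall c i j, 0 <= lam c i j) ->
  \sum_c gsum (Y c) = \sum_c gsum (X c) -> 0 <= xi.
Proof.
move=> N_gt0 I_gt0 Y_eq lam_ge0 same_mass.
have lam_mass : \sum_c gsum (lam c) = \sum_(c : I) xi *+ (N * N).
  have Y_mass : \sum_c gsum (Y c)
      = \sum_c (gsum (X c) + gsum (lam c) - gsum (fun _ _ => xi)).
    apply: eq_bigr => c _; rewrite -gsumD -gsumB.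
    by apply: eq_bigr => i _; apply: eq_bigr => j _; rewrite Y_eq.
  move: Y_mass; rewrite sumrB big_split /= same_mass.
  under [X in _ - X]eq_bigr do rewrite gsum_cst.
  lra.
have : 0 <= \sum_(c : I) xi *+ (N * N).
  by rewrite -lam_mass; apply: sumr_ge0 => c _; exact: gsum_ge0.
by rewrite sumr_const !pmulrn_lge0 // muln_gt0 N_gt0.
Qed.

End GridSum.

Definition reaction (R : realFieldType) (N : nat) (q : params R)
    (Psi : 'I_8 -> grid R N) : 'I_8 -> grid R N := fun c i j =>
  if c == iH then pdIp q * Psi iIp i j - pdH q * Psi iH i j
  else Lop q Psi c i j + Nop q Psi c i j.

Lemma sum_reaction (R : realFieldType) (N : nat) (q : params R)
    (Psi : 'I_8 -> grid R N) i j :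
  \sum_c reaction q Psi c i j = 0.
Proof. by rewrite !big_ord_recl big_ord0 /reaction /Lop /Nop /=; ring. Qed.

Theorem proposition4p1
  (R : realFieldType) (q : params R) (N : nat) (L tau m_p M_p : R)
  (p0 : grid R N)
  (Psi tPsi : nat -> 'I_8 -> grid R N) (p tp : nat -> grid R N)
  (lam : nat -> 'I_8 -> grid R N) (zeta : nat -> grid R N) (xi : nat -> R) :
  params_ok q -> (0 < N)%N -> 0 < L -> 0 < tau ->
  0 < m_p -> (forall i j, m_p <= p0 i j <= M_p) ->
  let h := L / N%:R in
  let D := pD q in
  let mass0 := ginner h (sumPsi (Psi 0%N)) (gcst 1) in
  (* predictor, k = 0 *)
  (forall c : 'I_8, c != iH -> forall i j,
     (tPsi 1%N c i j - Psi 0%N c i j) / tau =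
       D / 8 * lap h (gadd (tPsi 1%N c) (Psi 0%N c)) i j
       - D / 2 * chemo h p0 (Psi 0%N c) (p 0%N) i j
       + Lop q (Psi 0%N) c i j + Nop q (Psi 0%N) c i j) ->
  (forall i j,
     (tPsi 1%N iH i j - Psi 0%N iH i j) / tau =
       pdIp q * Psi 0%N iIp i j - pdH q * Psi 0%N iH i j) ->
  (forall i j,
     (tp 1%N i j - p 0%N i j) / tau =
       peta q * D / 2 * lap h (gadd (tp 1%N) (p 0%N)) i j
       + psrc q (Psi 0%N) (p 0%N) i j) ->
  (* predictor, k >= 1 (written for k = n.+1) *)
  (forall (n : nat) (c : 'I_8), c != iH -> forall i j,
     (tPsi n.+2 c i j - Psi n.+1 c i j) / tau =
       D / 8 * lap h (gadd (tPsi n.+2 c) (Psi n.+1 c)) i j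
       - 3%:R * D / 4%:R * chemo h p0 (Psi n.+1 c) (p n.+1) i j
       + D / 4%:R * chemo h p0 (Psi n c) (p n) i j
       + 3%:R / 2 * Lop q (Psi n.+1) c i j - 1 / 2 * Lop q (Psi n) c i j
       + 3%:R / 2 * Nop q (Psi n.+1) c i j - 1 / 2 * Nop q (Psi n) c i j) ->
  (forall (n : nat) i j,
     (tPsi n.+2 iH i j - Psi n.+1 iH i j) / tau =
       3%:R / 2 * pdIp q * Psi n.+1 iIp i j - 1 / 2 * pdIp q * Psi n iIp i j
       - 3%:R / 2 * pdH q * Psi n.+1 iH i j + 1 / 2 * pdH q * Psi n iH i j) ->
  (forall (n : nat) i j,
     (tp n.+2 i j - p n.+1 i j) / tau =
       peta q * D / 2 * lap h (gadd (tp n.+2) (p n.+1)) i j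
       + 3%:R / 2 * psrc q (Psi n.+1) (p n.+1) i j
       - 1 / 2 * psrc q (Psi n) (p n) i j) ->
  (* corrector: (Psi^{k+1}, p^{k+1}) is the constrained minimizer *)
  (forall k : nat,
     corr_feasible h mass0 (Psi k.+1) (p k.+1) /\
     forall Psi' p', corr_feasible h mass0 Psi' p' ->
       Jcorr h (tPsi k.+1) (tp k.+1) (Psi k.+1) (p k.+1) <= Jcorr h (tPsi k.+1) (tp k.+1) Psi' p') ->
  (* and (lam, zeta, xi) are associated KKT multipliers *)
  (forall k : nat,
     (forall c i j, Psi k.+1 c i j = tPsi k.+1 c i j + lam k.+1 c i j - xi k.+1) /\
     (forall i j, p k.+1 i j - lap h (p k.+1) i j
                  = tp k.+1 i j - lap h (tp k.+1) i j + zeta k.+1 i j) /\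
     (forall c i j, lam k.+1 c i j * Psi k.+1 c i j = 0) /\
     (forall i j, zeta k.+1 i j * p k.+1 i j = 0) /\
     (forall c i j, 0 <= lam k.+1 c i j) /\
     (forall i j, 0 <= zeta k.+1 i j) /\
     ginner h (sumPsi (Psi k.+1)) (gcst 1) = mass0) ->
  forall k : nat, 0 <= xi k.+1.
Proof.
move=> _ N_gt0 L_gt0 tau_gt0 _ _ h D mass0 pred0_Phi pred0_H _ pred_Phi pred_H _ _ KKT k.
have tau_neq0 : tau != 0 by rewrite gt_eqF.
have predictor_mass n : \sum_c gsum (tPsi n.+1 c) = \sum_c gsum (Psi n c).
  case: n => [|n].
  - apply: (@total_gsum_explicit_step _ _ _ tau _ _
      (fun c => if c == iH then fun _ _ => 0 else fun i j =>
         D / 8 * lap h (gadd (tPsi 1%N c) (Psi 0%N c)) i j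
         - D / 2 * chemo h p0 (Psi 0%N c) (p 0%N) i j)
      (reaction q (Psi 0%N)) tau_neq0 _ (sum_reaction q _)).
    + move=> c; case: (c == iH); first by rewrite gsum_cst mul0rn.
      by rewrite gsumB !gsumZ gsum_lap gsum_chemo !mulr0 subr0.
    + move=> c i j; rewrite /reaction; case: eqVneq => [->|/pred0_Phi ->].
      * by rewrite pred0_H add0r.
      * by ring.
  - apply: (@total_gsum_explicit_step _ _ _ tau _ _
      (fun c => if c == iH then fun _ _ => 0 else fun i j =>
         D / 8 * lap h (gadd (tPsi n.+2 c) (Psi n.+1 c)) i j
         - 3%:R * D / 4%:R * chemo h p0 (Psi n.+1 c) (p n.+1) i j
         + D / 4%:R * chemo h p0 (Psi n c) (p n) i j)
      (fun c i j => 3%:R / 2 * reaction q (Psi n.+1) c i j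
                    - 1 / 2 * reaction q (Psi n) c i j) tau_neq0).
    + move=> c; case: (c == iH); first by rewrite gsum_cst mul0rn.
      by rewrite gsumD gsumB !gsumZ gsum_lap !gsum_chemo !mulr0 subr0 addr0.
    + by move=> i j; rewrite sumrB -!mulr_sumr !sum_reaction !mulr0 subr0.
    + move=> c i j; rewrite /reaction; case: eqVneq => [->|/pred_Phi ->].
      * by rewrite pred_H add0r; ring.
      * by ring.
have mass n : h ^+ 2 * \sum_c gsum (Psi n c) = mass0.
  case: n => [|n]; first by rewrite /mass0 ginner_cst1 gsum_sum.
  by have [_ [_ [_ [_ [_ [_ <-]]]]]] := KKT n; rewrite ginner_cst1 gsum_sum.
have h2_neq0 : h ^+ 2 != 0.
  by rewrite expf_neq0 // mulf_neq0 ?gt_eqF // invr_gt0 ltr0n.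
have [Psi_eq [_ [_ [_ [lam_ge0 _]]]]] := KKT k.
apply: (mass_multiplier_ge0 N_gt0 _ Psi_eq lam_ge0); first by rewrite card_ord.
by apply: (mulfI h2_neq0); rewrite !mass predictor_mass.
Qed.
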